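(* Let $(X_1,\|\cdot\|_1)$ and $(X_2,\|\cdot\|_2)$ be two isomorphic Banach spaces. Assume that, for each $\varepsilon>0$, $X_1$ admits a bounded linear operator which is $\varepsilon$-hypercyclic but not hypercyclic. Then, for each $\varepsilon>0$, $X_2$ admits a bounded linear operator which is $\varepsilon$-hypercyclic but not hypercyclic.
   Context: For $\varepsilon>0$, an operator $T$ on a Banach space $X$ is $\varepsilon$-hypercyclic if there is $x\in X$ such that for every $y\in X\setminus\{0\}$ there is $n\in\mathbb{N}$ with $\|T^nx-y\|\le\varepsilon\|y\|$; $T$ is hypercyclic if some orbit $\{T^nx:n\in\mathbb{N}\}$ is dense in $X$. *)

From HB Require Import structures.
From mathcomp Require Import all_boot all_order all_algebra.
From mathcomp Require Import all_classical all_reals all_analysis.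
Set Implicit Arguments. Unset Strict Implicit. Unset Printing Implicit Defensive.
Import Order.TTheory GRing.Theory Num.Theory.
Import numFieldNormedType.Exports.
Local Open Scope classical_set_scope.
Local Open Scope ring_scope.

Definition orbit_of (K : numFieldType) (X : normedModType K)
  (T : X -> X) (x : X) : set X := range (fun n : nat => iter n T x).

Definition hypercyclic (K : numFieldType) (X : normedModType K)
  (T : X -> X) : Prop := exists x : X, dense (orbit_of T x).

Definition eps_hypercyclic (K : numFieldType) (X : normedModType K)
  (eps : K) (T : X -> X) : Prop :=
  exists x : X, forall y : X, y != 0 ->
    exists n : nat, `|iter n T x - y| <= eps * `|y|.

Definition bounded_operator (K : numFieldType) (X : normedModType K)
  (T : X -> X) : Prop := linear T /\ continuous T.

Definition isomorphic_spaces (K : numFieldType) (X1 X2 : normedModType K) : Prop :=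
  exists (J : X1 -> X2) (J' : X2 -> X1),
    [/\ linear J, continuous J, linear J', continuous J' &
        (cancel J J' /\ cancel J' J)].

From HB Require Import structures.
From mathcomp Require Import all_boot all_order all_algebra.
From mathcomp Require Import all_classical all_reals all_analysis.
Set Implicit Arguments. Unset Strict Implicit. Unset Printing Implicit Defensive.
Import Order.TTheory GRing.Theory Num.Theory.
Import numFieldNormedType.Exports.
Local Open Scope classical_set_scope.
Local Open Scope ring_scope.

(* If J : X1 -> X2 is an isomorphism with operator norms a and b, then
   conjugation T |-> J T J^-1 carries orbits to orbits, so it preserves
   (non-)hypercyclicity, and it turns an eps/(ab)-hypercyclic operator into
   an eps-hypercyclic one. *)

Lemma dense_image (T U : topologicalType) (f : T -> U) (A : set T) :
  continuous f -> set_surj setT setT f -> dense A -> dense (f @` A).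
Proof.
move=> cf fsurj denseA O [u Ou] oO.
case: (fsurj u I) Ou => t _ <- Oft.
have [a [Ofa Aa]] : f @^-1` O `&` A !=set0.
  by apply: denseA; [exists t | exact: open_comp].
by exists (f a); split; last exists a.
Qed.

Section ContinuousLinearBound.
Variables (K : numFieldType) (V W : normedModType K) (f : V -> W).
Hypotheses (lf : linear f) (cf : continuous f).

HB.instance Definition _ := GRing.isLinear.Build K V W *:%R f lf.

Lemma continuous_linear_norm_le :
  exists2 r : K, 0 < r & forall x, `|f x| <= r * `|x|.
Proof.
have /linear_boundedP := (linear_bounded_continuous f).2 cf.
by move=> /pinfty_ex_gt0 [r r0 fr]; exists r.
Qed.

End ContinuousLinearBound.

Section Conjugation.
Variables (K : numFieldType) (X Y : normedModType K).
Variables (J : X -> Y) (J' : Y -> X).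

Definition conjugate (T : X -> X) : Y -> Y := J \o T \o J'.

Hypotheses (JK : cancel J J') (J'K : cancel J' J).
Hypotheses (lJ : linear J) (lJ' : linear J').

HB.instance Definition _ := GRing.isLinear.Build K X Y *:%R J lJ.

Lemma iter_conjugate (T : X -> X) n y :
  iter n (conjugate T) y = J (iter n T (J' y)).
Proof. by elim: n => [|n /= ->]; rewrite ?J'K // /conjugate /= JK. Qed.

Lemma image_orbit_conjugate (T : X -> X) y :
  J' @` orbit_of (conjugate T) y = orbit_of T (J' y).
Proof.
rewrite /orbit_of image_comp; apply: eq_imagel => n _ /=.
by rewrite iter_conjugate JK.
Qed.

Lemma hypercyclic_conjugate (T : X -> X) :
  continuous J' -> hypercyclic (conjugate T) -> hypercyclic T.
Proof.
move=> cJ' [y dense_orbit]; exists (J' y).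
rewrite -image_orbit_conjugate; apply: dense_image => // x _.
by exists (J x); rewrite ?JK.
Qed.

Lemma bounded_operator_conjugate (T : X -> X) :
  continuous J -> continuous J' ->
  bounded_operator T -> bounded_operator (conjugate T).
Proof.
move=> cJ cJ' [lT cT]; split.
  by move=> c u v; rewrite /conjugate /= lJ' lT lJ.
move=> y; apply: continuous_comp; first exact: cJ'.
by apply: continuous_comp; [exact: cT | exact: cJ].
Qed.

Lemma eps_hypercyclic_conjugate (a b d : K) (T : X -> X) :
  0 <= a -> 0 <= d ->
  (forall x, `|J x| <= a * `|x|) -> (forall y, `|J' y| <= b * `|y|) ->
  eps_hypercyclic d T -> eps_hypercyclic (a * b * d) (conjugate T).
Proof.
move=> a0 d0 Ja J'b [x x_approx]; exists (J x) => y y0.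
have J'y0 : J' y != 0.
  by apply: contra y0 => /eqP J'y_eq0; rewrite -[y]J'K J'y_eq0 linear0.
have [n Tnx_close] := x_approx _ J'y0; exists n.
rewrite iter_conjugate JK -[y in _ - y]J'K -linearB.
apply: (le_trans (Ja _)); rewrite -!mulrA ler_wpM2l //.
by apply: (le_trans Tnx_close); rewrite mulrCA ler_wpM2l.
Qed.

End Conjugation.

Theorem proposition6p1 (K : numFieldType)
  (X1 X2 : completeNormedModType K) :
  isomorphic_spaces X1 X2 ->
  (forall eps : K, 0 < eps ->
     exists T : X1 -> X1,
       [/\ bounded_operator T, eps_hypercyclic eps T & ~ hypercyclic T]) ->
  forall eps : K, 0 < eps ->
    exists T : X2 -> X2,
      [/\ bounded_operator T, eps_hypercyclic eps T & ~ hypercyclic T].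
Proof.
move=> [J [J' [lJ cJ lJ' cJ' [JK J'K]]]] ex_T eps eps0.
have [a a0 Ja] := continuous_linear_norm_le lJ cJ.
have [b b0 J'b] := continuous_linear_norm_le lJ' cJ'.
have ab0 : 0 < a * b by rewrite mulr_gt0.
have [T [T_bounded T_eps nT_hyp]] := ex_T _ (divr_gt0 eps0 ab0).
exists (conjugate J J' T); split.
- exact: bounded_operator_conjugate.
- have -> : eps = a * b * (eps / (a * b)) by rewrite mulrC divfK ?gt_eqF.
  by apply: eps_hypercyclic_conjugate; rewrite ?ltW ?divr_gt0.
- by move/(hypercyclic_conjugate JK J'K cJ').
Qed.
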